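(* Let $k \ge 1$ be an integer. Let $P_1$ and $P_2$ be disjoint piles of coins, each of size $2^k$, and suppose exactly one coin of $P_1$ and exactly one coin of $P_2$ are counterfeit (all other coins genuine). Then there is an adaptive strategy using at most $k+1$ weighings on a 5-way scale (using only coins of $P_1 \cup P_2$) that determines both counterfeit coins.
   Context: Coins look identical; all genuine coins have one common weight, all counterfeit coins have one common weight strictly less than the genuine weight. A weighing places two disjoint sets of coins of equal cardinality on the left and right pans. Let $d$ = (number of counterfeit coins on the left pan) $-$ (number of counterfeit coins on the right pan). A 5-way scale reports MUCH LESS if $d \ge 2$, LESS if $d = 1$, EQUAL if $d = 0$, MORE if $d = -1$, MUCH MORE if $d \le -2$. A strategy chooses each weighing possibly depending on previous outcomes; it determines the counterfeit coins if the sequence of outcomes uniquely identifies them. *)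

From HB Require Import structures.
From mathcomp Require Import all_boot all_order all_algebra.
Set Implicit Arguments. Unset Strict Implicit. Unset Printing Implicit Defensive.
Import Order.TTheory GRing.Theory Num.Theory.

Inductive outcome := MuchLess | Less | Equal | More | MuchMore.

Section Coins.
Variable T : finType.

Definition diff_cf (L R C : {set T}) : int :=
  (#|L :&: C|%:Z - #|R :&: C|%:Z)%R.

Definition scale (L R C : {set T}) : outcome :=
  let d := diff_cf L R C in
  if (2 <= d)%R then MuchLess
  else if d == 1%R then Less
  else if d == 0%R then Equal
  else if d == (-1)%R then More
  else MuchMore.

Definition valid_weighing (L R : {set T}) : bool :=
  [disjoint L & R] && (#|L| == #|R|).

Inductive strategy :=
  | Stop
  | Weigh (L R : {set T}) (next : outcome -> strategy).

Fixpoint valid_strategy (s : strategy) : Prop :=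
  match s with
  | Stop => True
  | Weigh L R nx => valid_weighing L R /\
      forall o, valid_strategy (nx o)
  end.

Fixpoint depth (s : strategy) : nat :=
  match s with
  | Stop => 0
  | Weigh _ _ nx => (maxn (depth (nx MuchLess)) (maxn (depth (nx Less))
        (maxn (depth (nx Equal)) (maxn (depth (nx More)) (depth (nx MuchMore)))))).+1
  end.

Fixpoint run (s : strategy) (C : {set T}) : seq outcome :=
  match s with
  | Stop => [::]
  | Weigh L R nx => let o := scale L R C in o :: run (nx o) C
  end.

Definition determines (adm : {set T} -> Prop) (s : strategy) : Prop :=
  forall C1 C2, adm C1 -> adm C2 -> run s C1 = run s C2 -> C1 = C2.

End Coins.

(* Coins of P1 are inl i, coins of P2 are inr j, with i, j : 'I_(2^k). *)
Definition coins (k : nat) : finType := ('I_(2 ^ k) + 'I_(2 ^ k))%type.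

Definition one_in_each (k : nat) (C : {set coins k}) : Prop :=
  exists (i j : 'I_(2 ^ k)), C = [set inl i; inr j].

From HB Require Import structures.
From mathcomp Require Import all_boot all_order all_algebra zify.
Set Implicit Arguments. Unset Strict Implicit. Unset Printing Implicit Defensive.
Import Order.TTheory GRing.Theory Num.Theory.

(* Two counterfeits, one in each pile of 2^k coins, are found NON-adaptively
   with k + 1 weighings.  Number the coins of each pile in binary with k bits
   and write b_t(x) for bit t of coin x.  Weighing 0 puts every coin x of P1
   on the side given by its sign bit b_0(x); weighing t = 1..k puts coin x of
   P1 on side b_0(x) exactly when b_t(x) = 1, and every coin y of P2 on the
   side given by b_(t-1)(y).
   Since at most two counterfeits are involved, the difference d never leaves
   [-2, 2], where the 5-way scale reports d exactly.  Weighing 0 reveals the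
   sign bit of the counterfeit of P1; each later weighing then yields
   d = ±[b_t(x)] ± 1 whose parity separates b_t(x) from b_(t-1)(y) (bits
   beyond k - 1 are 0, so weighing k involves P2 only). *)

Section ScaleReading.
Local Open Scope ring_scope.

Definition outcome_of (d : int) : outcome :=
  if 2 <= d then MuchLess else if d == 1 then Less else if d == 0 then Equal
  else if d == -1 then More else MuchMore.

Lemma scaleE (T : finType) (L R C : {set T}) :
  scale L R C = outcome_of (diff_cf L R C).
Proof. by []. Qed.

Lemma outcome_inj (d1 d2 : int) : `|d1| <= 2 -> `|d2| <= 2 ->
  outcome_of d1 = outcome_of d2 -> d1 = d2.
Proof.
rewrite /outcome_of !ler_norml => /andP[? ?] /andP[? ?].
by do ![case: ifP => /eqP ? || case: ifP => ?] => //; lia.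
Qed.
End ScaleReading.

Section Pans.
Local Open Scope ring_scope.
Variable T : finType.
Implicit Types (pan : T -> option bool) (C : {set T}).

Definition left_pan pan : {set T} := [set c | pan c == Some true].
Definition right_pan pan : {set T} := [set c | pan c == Some false].

Definition weight (p : option bool) : int :=
  match p with Some true => 1 | Some false => -1 | None => 0 end.

Lemma weight_norm p : `|weight p| <= 1.
Proof. by case: p => [[]|]. Qed.

Lemma card_meet_sum (A C : {set T}) : #|A :&: C|%:Z = \sum_(c in C) (c \in A)%:Z.
Proof.
rewrite -sum1_card -natz natr_sum big_mkcond [RHS]big_mkcond /=.
by apply: eq_bigr => c _; rewrite !inE; case: (c \in A); case: (c \in C).
Qed.

Lemma diff_cf_pans pan C :
  diff_cf (left_pan pan) (right_pan pan) C = \sum_(c in C) weight (pan c).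
Proof.
rewrite /diff_cf !card_meet_sum -sumrB; apply: eq_bigr => c _.
by rewrite !inE; case: (pan c) => [[]|].
Qed.

Lemma diff_cf_pair pan a b : a != b ->
  diff_cf (left_pan pan) (right_pan pan) [set a; b] = weight (pan a) + weight (pan b).
Proof. by move=> ab; rewrite diff_cf_pans big_setU1 ?big_set1 // inE. Qed.

Lemma scale_pair pan (a1 b1 a2 b2 : T) : a1 != b1 -> a2 != b2 ->
  scale (left_pan pan) (right_pan pan) [set a1; b1] =
  scale (left_pan pan) (right_pan pan) [set a2; b2] ->
  weight (pan a1) + weight (pan b1) = weight (pan a2) + weight (pan b2).
Proof.
have norm2 a b : `|weight (pan a) + weight (pan b)| <= 2.
  by apply: le_trans (ler_normD _ _) _; rewrite (lerD (weight_norm _) (weight_norm _)).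
by move=> ab1 ab2; rewrite !scaleE !diff_cf_pair //; apply: outcome_inj.
Qed.

Lemma valid_pans pan (f : T -> T) : involutive f ->
  (forall c, pan (f c) = omap negb (pan c)) ->
  valid_weighing (left_pan pan) (right_pan pan).
Proof.
move=> fK pan_f; apply/andP; split.
  by rewrite disjoint_subset; apply/subsetP => c; rewrite !inE => /eqP->.
have -> : right_pan pan = f @: left_pan pan.
  apply/setP => c; rewrite -[in RHS](fK c) mem_imset ?inE ?pan_f; last exact: inv_inj.
  by case: (pan c) => [[]|].
by rewrite card_imset //; exact: inv_inj.
Qed.
End Pans.

Section Oblivious.
Variable T : finType.
Implicit Types (ws : seq ({set T} * {set T})) (C : {set T}).

Definition oblivious ws : strategy T :=
  foldr (fun w s => Weigh w.1 w.2 (fun=> s)) (Stop T) ws.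

Lemma valid_oblivious ws : all (fun w => valid_weighing w.1 w.2) ws ->
  valid_strategy (oblivious ws).
Proof. by elim: ws => [|w ws IH] //= /andP[valid_w /IH]; split. Qed.

Lemma depth_oblivious ws : depth (oblivious ws) = size ws.
Proof. by elim: ws => [|w ws IH] //=; rewrite IH !maxnn. Qed.

Lemma run_oblivious ws C : run (oblivious ws) C = [seq scale w.1 w.2 C | w <- ws].
Proof. by elim: ws => [|w ws IH] //=; rewrite IH. Qed.
End Oblivious.

Section BinaryCode.
Variable n : nat.
Implicit Types (x y : 'I_(2 ^ n)) (f : {ffun 'I_n -> bool}).

Lemma card_codes : #|{ffun 'I_n -> bool}| = 2 ^ n.
Proof. by rewrite card_ffun card_bool card_ord. Qed.

Definition code x : {ffun 'I_n -> bool} := enum_val (cast_ord (esym card_codes) x).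
Definition decode f : 'I_(2 ^ n) := cast_ord card_codes (enum_rank f).

Lemma codeK : cancel code decode.
Proof. by move=> x; rewrite /code /decode enum_valK cast_ordKV. Qed.

Lemma decodeK : cancel decode code.
Proof. by move=> f; rewrite /code /decode cast_ordK enum_rankK. Qed.

(* Bit t of x, taken to be 0 for t >= n. *)
Definition bit x (t : nat) : bool := if insub t is Some u then code x u else false.

Lemma bit_inj x y : (forall t, t < n -> bit x t = bit y t) -> x = y.
Proof.
move=> same; apply: (can_inj codeK); apply/ffunP => u.
by have := same u (ltn_ord u); rewrite /bit valK.
Qed.

Definition flip (u : nat) x : 'I_(2 ^ n) :=
  decode [ffun v : 'I_n => (val v == u) (+) code x v].

Lemma flipK u : involutive (flip u).
Proof.
move=> x; rewrite /flip decodeK -[RHS]codeK; congr decode.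
by apply/ffunP => v; rewrite !ffunE addbA addbb.
Qed.

Lemma bit_flip u x t : u < n -> bit (flip u x) t = (t == u) (+) bit x t.
Proof.
move=> un; rewrite /bit; case: insubP => [v _ <-|]; first by rewrite decodeK ffunE.
by rewrite addbF => tn; apply/esym/negbTE; apply: contra tn => /eqP->.
Qed.
End BinaryCode.

Section Schedule.
Local Open Scope ring_scope.
Variable n : nat.
Implicit Types (x y : 'I_(2 ^ n)%N) (c : coins n).

Definition pan_at (t : nat) c : option bool :=
  match c with
  | inl x => if (t == 0)%N || bit x t then Some (bit x 0) else None
  | inr y => if t is s.+1 then Some (bit y s) else None
  end.

Definition schedule : seq ({set coins n} * {set coins n}) :=
  [seq (left_pan (pan_at t), right_pan (pan_at t)) | t <- iota 0 n.+1].

Definition mirror (t : nat) c : coins n :=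
  match c with inl x => inl (flip 0 x) | inr y => inr (flip t.-1 y) end.

Lemma mirrorK t : involutive (mirror t).
Proof. by case=> z /=; rewrite flipK. Qed.

Lemma pan_at_mirror t c : (0 < n)%N -> (t <= n)%N ->
  pan_at t (mirror t c) = omap negb (pan_at t c).
Proof.
move=> n_gt0 tn; case: c => [x|y] /=.
  by rewrite !bit_flip // eqxx /=; case: eqP => [->|_] //=; case: (bit x t).
by case: t tn => [|s] //= sn; rewrite bit_flip // eqxx.
Qed.

Lemma valid_schedule : (0 < n)%N -> all (fun w => valid_weighing w.1 w.2) schedule.
Proof.
move=> n_gt0; apply/allP => w /mapP[t]; rewrite mem_iota ltnS => /andP[_ tn] -> /=.
exact: valid_pans (mirrorK t) (fun c => pan_at_mirror c n_gt0 tn).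
Qed.

Lemma schedule_weights x1 y1 x2 y2 :
  run (oblivious schedule) [set inl x1; inr y1] =
  run (oblivious schedule) [set inl x2; inr y2] ->
  forall t, (t <= n)%N ->
  weight (pan_at t (inl x1)) + weight (pan_at t (inr y1)) =
  weight (pan_at t (inl x2)) + weight (pan_at t (inr y2)).
Proof.
rewrite !run_oblivious -!map_comp => /eq_in_map same t tn.
by apply: scale_pair => //; apply: same; rewrite mem_iota ltnS.
Qed.

(* Parity decoding: once the sign s is known, a weight (a ? s) plus a weight
   ±1 determines both a and the ±1. *)
Lemma weight_step s a1 a2 b1 b2 :
  weight (if a1 then Some s else None) + weight (Some b1) =
  weight (if a2 then Some s else None) + weight (Some b2) -> a1 = a2 /\ b1 = b2.
Proof. by case: s a1 a2 b1 b2 => [] [] [] [] []. Qed.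

Lemma schedule_determines : determines (@one_in_each n) (oblivious schedule).
Proof.
move=> _ _ [x1 [y1 ->]] [x2 [y2 ->]] /schedule_weights same.
have sign : bit x1 0 = bit x2 0.
  by have := same 0 (leq0n n); rewrite /= !addr0; case: (bit x1 0); case: (bit x2 0).
have step t : (t < n)%N -> bit x1 t.+1 = bit x2 t.+1 /\ bit y1 t = bit y2 t.
  by move=> tn; have := same t.+1 tn; rewrite /= sign => /weight_step.
have -> : x1 = x2 by apply: bit_inj => -[|t] // /ltnW /step[].
by have -> : y1 = y2 by apply: bit_inj => t /step[].
Qed.
End Schedule.

Theorem mainTheorem5 (k : nat) (hk : 1 <= k) :
  exists s : strategy (coins k),
    [/\ valid_strategy s, depth s <= k.+1 & determines (@one_in_each k) s].
Proof.
exists (oblivious (schedule k)); split.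
- exact/valid_oblivious/(valid_schedule hk).
- by rewrite depth_oblivious size_map size_iota.
- exact: schedule_determines.
Qed.
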